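(* In the standing setting below, let $X_i=(x_i,u_i)\in\mathbb{X}\times\mathbb{R}$ for $i=0,1$, and set $u_i'=F_{X_0X_1}(x_i)$ and $X_i'=(x_i,u_i')$ for $i=0,1$. Then $F_{X_0X_1}=F_{X_0'X_1'}$ on $\mathbb{X}$.
   Context: Standing setting: $\mathbb{X},\mathbb{Y}\subset\mathbb{R}^n$ are compact with non-empty interior; $c:\mathbb{X}\times\mathbb{Y}\to\mathbb{R}$ has continuous $D_xc$, $D_yc$, and continuous mixed second derivatives with $D^2_{xy}c=(D^2_{yx}c)^T$; for each $x$ the map $y\mapsto -D_xc(x,y)$ is injective on $\mathbb{Y}$ and for each $y$ the map $x\mapsto -D_yc(x,y)$ is injective on $\mathbb{X}$; $D^2_{xy}c(x,y)$ is invertible everywhere; for every $y$ the set $\{-D_yc(x,y):x\in\mathbb{X}\}$ is convex and for every $x$ the set $\{-D_xc(x,y):y\in\mathbb{Y}\}$ is convex. $c$-chord: for $X_i=(x_i,u_i)\in\mathbb{X}\times\mathbb{R}$, $F_{X_0X_1}(x)=\sup\{-c(x,y)+h: y\in\mathbb{Y},h\in\mathbb{R},-c(x_i,y)+h\le u_i, i=0,1\}$. *)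

From HB Require Import structures.
From mathcomp Require Import all_boot all_order all_algebra.
From mathcomp Require Import all_classical all_reals all_analysis.
Set Implicit Arguments. Unset Strict Implicit. Unset Printing Implicit Defensive.
Import Order.TTheory GRing.Theory Num.Theory.
Import numFieldNormedType.Exports.
Local Open Scope classical_set_scope.
Local Open Scope ring_scope.

Section Defs.
Variables (R : realType) (n : nat).
Notation V := 'rV[R]_n.

Definition evec (i : 'I_n) : V := delta_mx 0 i.

Definition Dxc (c : V -> V -> R) (x y : V) : V :=
  \row_i 'D_(evec i) (fun x' => c x' y) x.
Definition Dyc (c : V -> V -> R) (x y : V) : V :=
  \row_i 'D_(evec i) (fun y' => c x y') y.
Definition D2xyc (c : V -> V -> R) (x y : V) : 'M[R]_n :=
  \matrix_(i, j) 'D_(evec j) (fun y' => 'D_(evec i) (fun x' => c x' y') x) y.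
Definition D2yxc (c : V -> V -> R) (x y : V) : 'M[R]_n :=
  \matrix_(i, j) 'D_(evec j) (fun x' => 'D_(evec i) (fun y' => c x' y') y) x.

Definition convex_set_rV (A : set V) : Prop :=
  forall a b t, A a -> A b -> 0 <= t -> t <= 1 -> A (t *: a + (1 - t) *: b).

Definition standing_setting (X Y : set V) (c : V -> V -> R) : Prop :=
  [/\ compact X, compact Y, (X°) !=set0 & (Y°) !=set0] /\
  [/\
   (forall x y i, X x -> Y y ->
      derivable (fun x' => c x' y) x (evec i) /\
      derivable (fun y' => c x y') y (evec i)),
   {within X `*` Y, continuous (fun p : V * V => Dxc c p.1 p.2)} &
   {within X `*` Y, continuous (fun p : V * V => Dyc c p.1 p.2)}] /\
   [/\ (forall x y i j, X x -> Y y ->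
          derivable (fun y' => 'D_(evec i) (fun x' => c x' y') x) y (evec j) /\
          derivable (fun x' => 'D_(evec i) (fun y' => c x' y') y) x (evec j)),
       {within X `*` Y, continuous (fun p : V * V => D2xyc c p.1 p.2)},
       {within X `*` Y, continuous (fun p : V * V => D2yxc c p.1 p.2)} &
       (forall x y, X x -> Y y -> D2xyc c x y = (D2yxc c x y)^T)] /\
   [/\
       (forall x, X x -> {in Y &, injective (fun y => - Dxc c x y)}),
       (forall y, Y y -> {in X &, injective (fun x => - Dyc c x y)}),
       (forall x y, X x -> Y y -> D2xyc c x y \in unitmx),
       (forall y, Y y -> convex_set_rV [set - Dyc c x y | x in X]) &
       (forall x, X x -> convex_set_rV [set - Dxc c x y | y in Y])].

Definition cchord (Y : set V) (c : V -> V -> R) (X0 X1 : V * R) (x : V) : R :=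
  sup [set z | exists y h, [/\ Y y, - c X0.1 y + h <= X0.2,
                               - c X1.1 y + h <= X1.2 & z = - c x y + h]].

End Defs.

From HB Require Import structures.
From mathcomp Require Import all_boot all_order all_algebra.
From mathcomp Require Import all_classical all_reals all_analysis.
Import Order.TTheory GRing.Theory Num.Theory.
Local Open Scope classical_set_scope.
Local Open Scope ring_scope.

(* At a
   node the supremum never exceeds u_i, and every feasible pair stays below it,
   so replacing u_i by F(x_i) leaves the feasible set, hence F, unchanged.  The
   bound F(x_i) <= u_i needs a feasible pair (the sup of the empty set is junk);
   one exists above every y in Y, and for empty Y both feasible sets are empty.
   The argument is purely order-theoretic. *)

Section CChord.
Variables (R : realType) (n : nat) (Y : set 'rV[R]_n) (c : 'rV[R]_n -> 'rV[R]_n -> R).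

Definition cchord_feasible (X0 X1 : 'rV[R]_n * R) : set ('rV[R]_n * R) :=
  [set p | [/\ Y p.1, - c X0.1 p.1 + p.2 <= X0.2 & - c X1.1 p.1 + p.2 <= X1.2]].

Lemma cchordE X0 X1 x :
  cchord Y c X0 X1 x = sup [set - c x p.1 + p.2 | p in cchord_feasible X0 X1].
Proof.
congr sup; apply/seteqP; split=> z.
  by move=> [y [h [Yy h0 h1 ->]]]; exists (y, h).
by move=> [[y h] [Yy h0 h1] <-]; exists y, h.
Qed.

Lemma cchord_feasibleC X0 X1 : cchord_feasible X0 X1 = cchord_feasible X1 X0.
Proof. by apply/seteqP; split=> p []. Qed.

Lemma cchordC X0 X1 : cchord Y c X0 X1 = cchord Y c X1 X0.
Proof. by apply/funext=> x; rewrite !cchordE cchord_feasibleC. Qed.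

Lemma cchord_feasible_min X0 X1 y : Y y ->
  cchord_feasible X0 X1 (y, Num.min (X0.2 + c X0.1 y) (X1.2 + c X1.1 y)).
Proof.
by move=> Yy; split=> //=; rewrite addrC -lerBrDr opprK ge_min lexx ?orbT.
Qed.

Lemma cchord_node_ubound X0 X1 :
  ubound [set - c X0.1 p.1 + p.2 | p in cchord_feasible X0 X1] X0.2.
Proof. by move=> _ [p [_ h0 _] <-]. Qed.

Lemma le_cchord_node X0 X1 p : cchord_feasible X0 X1 p ->
  - c X0.1 p.1 + p.2 <= cchord Y c X0 X1 X0.1.
Proof.
move=> feas_p; rewrite cchordE; apply: ub_le_sup; last by exists p.
by exists X0.2; exact: cchord_node_ubound.
Qed.

Lemma cchord_node_le X0 X1 y : Y y -> cchord Y c X0 X1 X0.1 <= X0.2.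
Proof.
move=> Yy; rewrite cchordE; apply: ge_sup; last exact: cchord_node_ubound.
pose h := Num.min (X0.2 + c X0.1 y) (X1.2 + c X1.1 y).
by exists (- c X0.1 y + h); exists (y, h); first exact: cchord_feasible_min.
Qed.

Lemma cchord_feasible_nodes x0 x1 u0 u1 :
  cchord_feasible (x0, cchord Y c (x0, u0) (x1, u1) x0)
                  (x1, cchord Y c (x0, u0) (x1, u1) x1) =
  cchord_feasible (x0, u0) (x1, u1).
Proof.
apply/seteqP; split=> -[y h] feas; last first.
  have [Yy _ _] := feas; split=> //=.
  - exact: le_cchord_node _ _ _ feas.
  - rewrite cchord_feasibleC in feas.
    by rewrite cchordC; exact: le_cchord_node _ _ _ feas.
have [/= Yy h0 h1] := feas; split=> //=.
- exact: le_trans h0 (cchord_node_le _ _ _ Yy).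
- by apply: le_trans h1 _; rewrite cchordC; exact: (cchord_node_le _ _ _ Yy).
Qed.

Lemma cchord_nodes x0 x1 u0 u1 :
  cchord Y c (x0, cchord Y c (x0, u0) (x1, u1) x0)
             (x1, cchord Y c (x0, u0) (x1, u1) x1) =
  cchord Y c (x0, u0) (x1, u1).
Proof.
apply/funext=> x; rewrite [LHS]cchordE cchord_feasible_nodes.
exact/esym/cchordE.
Qed.

End CChord.

Theorem lemma3p5 (R : realType) (n : nat) (X Y : set 'rV[R]_n)
  (c : 'rV[R]_n -> 'rV[R]_n -> R) :
  standing_setting X Y c ->
  forall (x0 x1 : 'rV[R]_n) (u0 u1 : R), X x0 -> X x1 ->
  let F := cchord Y c (x0, u0) (x1, u1) in
  let F' := cchord Y c (x0, F x0) (x1, F x1) in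
  forall x, X x -> F x = F' x.
Proof.
move=> _ x0 x1 u0 u1 _ _ F F' x _.
by rewrite /F' /F cchord_nodes.
Qed.
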